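(* Let $n\ge 2$, $P_{\max}>0$, $g_{i,i}>0$ and $g_{i,j}\ge 0$ for all $i,j\in\{1,\dots,n\}$. For $\mathbf P\in[0,P_{\max}]^n$ let $\mathbf R(\mathbf P)=(R_1(\mathbf P),\dots,R_n(\mathbf P))$. Define the power-control rate region $$\mathcal A=\{\mathbf r\in\mathbb R_{\ge0}^n:\ \exists\,\mathbf P\in[0,P_{\max}]^n \text{ with } \mathbf r\le \mathbf R(\mathbf P)\text{ componentwise}\}.$$ For each $i$ define the hyper-surface $\Phi_i=\{\mathbf R(\mathbf P):\mathbf P\in[0,P_{\max}]^n,\ P_i=P_{\max}\}$ and the region $$\mathcal R_i=\{\mathbf r\in\mathbb R^n_{\ge 0}: \exists\,\mathbf x\in\Phi_i,\ \mathbf r\le\mathbf x \text{ componentwise}\}.$$ Then $\mathcal A=\bigcup_{i=1}^n\mathcal R_i$. Consequently, the achievable rate region $\mathcal R=\mathrm{Conv}(\mathcal A)$ satisfies $$\mathcal R=\mathrm{Conv}\Big(\bigcup_{i=1}^n\mathcal R_i\Big).$$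
   Context: This is the $n$-user interference channel with interference treated as noise. Transmitter $i$ uses power $P_i\in[0,P_{\max}]$. The quantity $g_{i,j}$ is the channel power gain from transmitter $j$ to receiver $i$, normalized by the (unit) noise variance. The rate of pair $i$ is $$R_i(\mathbf P)=\log_2\!\left(1+\frac{g_{i,i}P_i}{1+\sum_{j\ne i}g_{i,j}P_j}\right).$$ $\mathrm{Conv}$ denotes the convex hull; taking it corresponds to time-sharing between operating points. *)

From Stdlib Require Import Reals Lra Lia.
Open Scope R_scope.

(* Indices are 0..n-1 (paper: 1..n).  Vectors in R^n are functions nat -> R,
   only the components with index < n matter. *)

Fixpoint sum_upto (n : nat) (f : nat -> R) : R :=
  match n with
  | O => 0
  | S m => sum_upto m f + f m
  end.

Definition log2 (x : R) : R := ln x / ln 2.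

Definition interf (n : nat) (g : nat -> nat -> R) (P : nat -> R) (i : nat) : R :=
  sum_upto n (fun j => if Nat.eqb j i then 0 else g i j * P j).

Definition rate (n : nat) (g : nat -> nat -> R) (P : nat -> R) (i : nat) : R :=
  log2 (1 + g i i * P i / (1 + interf n g P i)).

Definition power_ok (n : nat) (Pmax : R) (P : nat -> R) : Prop :=
  forall i, (i < n)%nat -> 0 <= P i <= Pmax.

Definition nonneg_vec (n : nat) (r : nat -> R) : Prop :=
  forall i, (i < n)%nat -> 0 <= r i.

Definition vle (n : nat) (r x : nat -> R) : Prop :=
  forall i, (i < n)%nat -> r i <= x i.

Definition regionA (n : nat) (Pmax : R) (g : nat -> nat -> R) (r : nat -> R) : Prop :=
  nonneg_vec n r /\
  exists P, power_ok n Pmax P /\ vle n r (rate n g P).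

Definition Phi (n : nat) (Pmax : R) (g : nat -> nat -> R) (i : nat) (x : nat -> R) : Prop :=
  exists P, power_ok n Pmax P /\ P i = Pmax /\
    forall k, (k < n)%nat -> x k = rate n g P k.

Definition regionRi (n : nat) (Pmax : R) (g : nat -> nat -> R) (i : nat) (r : nat -> R) : Prop :=
  nonneg_vec n r /\ exists x, Phi n Pmax g i x /\ vle n r x.

Definition unionRi (n : nat) (Pmax : R) (g : nat -> nat -> R) (r : nat -> R) : Prop :=
  exists i, (i < n)%nat /\ regionRi n Pmax g i r.

Definition conv (S : (nat -> R) -> Prop) (r : nat -> R) : Prop :=
  exists (m : nat) (lam : nat -> R) (pts : nat -> nat -> R),
    (forall k, (k < m)%nat -> 0 <= lam k /\ S (pts k)) /\
    sum_upto m lam = 1 /\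
    forall i, r i = sum_upto m (fun k => lam k * pts k i).

From Stdlib Require Import Reals Lra Lia FunctionalExtensionality.
Open Scope R_scope.

(* A rate vector achieved by a power vector P is dominated by the
   rate vector achieved by the rescaled powers c * P with c = Pmax / max_j P_j
   >= 1: scaling every power by c >= 1 multiplies signal and interference by c,
   and SINR = cS/(1 + cI) >= S/(1 + I) while log2 is increasing.  The rescaled
   vector is feasible and puts the maximal user i at full power, so its rates lie
   on the hyper-surface Phi_i.  (If all powers vanish, every rate is 0 and any
   full-power vector dominates.)  Hence A is contained in the union of the R_i;
   the reverse inclusion is immediate since Phi_i consists of achievable rates. *)

Lemma sum_upto_nonneg (m : nat) (f : nat -> R) :
  (forall j, (j < m)%nat -> 0 <= f j) -> 0 <= sum_upto m f.
Proof.
  induction m as [|m IH]; simpl; intros Hf; [lra|].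
  assert (0 <= f m) by (apply Hf; lia).
  assert (0 <= sum_upto m f) by (apply IH; intros j Hj; apply Hf; lia).
  lra.
Qed.

Lemma sum_upto_scale (m : nat) (c : R) (f : nat -> R) :
  sum_upto m (fun j => c * f j) = c * sum_upto m f.
Proof. induction m as [|m IH]; simpl; [ring | rewrite IH; ring]. Qed.

Lemma log2_le (x y : R) : 0 < x -> x <= y -> log2 x <= log2 y.
Proof.
  intros Hx [Hxy | ->]; [|lra].
  unfold log2.
  assert (0 < ln 2) by (pose proof ln_lt_2; lra).
  apply Rmult_le_compat_r.
  - left; apply Rinv_0_lt_compat; lra.
  - left; apply ln_increasing; lra.
Qed.

Lemma log2_1 : log2 1 = 0.
Proof. unfold log2; rewrite ln_1; lra. Qed.

Lemma sinr_scale (S I c : R) : 0 <= S -> 0 <= I -> 1 <= c ->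
  S / (1 + I) <= c * S / (1 + c * I).
Proof.
  intros HS HI Hc.
  assert (0 < 1 + c * I) by nra.
  unfold Rdiv. apply Rmult_le_reg_r with ((1 + I) * (1 + c * I)); [nra|].
  replace (S * / (1 + I) * ((1 + I) * (1 + c * I))) with (S * (1 + c * I))
    by (field; lra).
  replace (c * S * / (1 + c * I) * ((1 + I) * (1 + c * I))) with (c * S * (1 + I))
    by (field; lra).
  nra.
Qed.

Section Rates.

Variables (n : nat) (g : nat -> nat -> R).

Hypothesis g_nonneg : forall i j, (i < n)%nat -> (j < n)%nat -> 0 <= g i j.

Lemma interf_nonneg (P : nat -> R) (i : nat) : (i < n)%nat ->
  (forall j, (j < n)%nat -> 0 <= P j) -> 0 <= interf n g P i.
Proof.
  intros Hi HP. apply sum_upto_nonneg. intros j Hj.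
  destruct (Nat.eqb j i); [lra|]. apply Rmult_le_pos; auto.
Qed.

Lemma interf_scale (P : nat -> R) (c : R) (i : nat) :
  interf n g (fun j => c * P j) i = c * interf n g P i.
Proof.
  unfold interf. rewrite <- sum_upto_scale. f_equal.
  apply functional_extensionality. intros j. destruct (Nat.eqb j i); ring.
Qed.

Lemma sinr_nonneg (P : nat -> R) (k : nat) : (k < n)%nat ->
  (forall j, (j < n)%nat -> 0 <= P j) ->
  0 <= g k k * P k / (1 + interf n g P k).
Proof.
  intros Hk HP. pose proof (interf_nonneg P k Hk HP).
  unfold Rdiv. apply Rmult_le_pos.
  - apply Rmult_le_pos; auto.
  - left; apply Rinv_0_lt_compat; lra.
Qed.

Lemma rate_nonneg (P : nat -> R) (k : nat) : (k < n)%nat ->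
  (forall j, (j < n)%nat -> 0 <= P j) -> 0 <= rate n g P k.
Proof.
  intros Hk HP. unfold rate. rewrite <- log2_1.
  pose proof (sinr_nonneg P k Hk HP). apply log2_le; lra.
Qed.

Lemma rate_silent (P : nat -> R) (k : nat) : P k = 0 -> rate n g P k = 0.
Proof.
  intros Hk. unfold rate. rewrite Hk, Rmult_0_r, Rdiv_0_l, Rplus_0_r.
  exact log2_1.
Qed.

Lemma rate_scale (P : nat -> R) (c : R) (k : nat) : (k < n)%nat -> 1 <= c ->
  (forall j, (j < n)%nat -> 0 <= P j) ->
  rate n g P k <= rate n g (fun j => c * P j) k.
Proof.
  intros Hk Hc HP. unfold rate. rewrite interf_scale.
  pose proof (sinr_nonneg P k Hk HP).
  assert (Hsig : 0 <= g k k * P k) by (apply Rmult_le_pos; auto).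
  replace (g k k * (c * P k)) with (c * (g k k * P k)) by ring.
  pose proof (sinr_scale _ _ c Hsig (interf_nonneg P k Hk HP) Hc).
  apply log2_le; lra.
Qed.

End Rates.

Lemma exists_argmax (n : nat) (P : nat -> R) : (1 <= n)%nat ->
  exists i, (i < n)%nat /\ forall j, (j < n)%nat -> P j <= P i.
Proof.
  induction n as [|n IH]; intros Hn; [lia|].
  destruct (Nat.eq_dec n 0) as [-> | Hn0].
  - exists 0%nat. split; [lia|]. intros j Hj. replace j with 0%nat by lia. lra.
  - destruct IH as [i [Hi Hmax]]; [lia|].
    destruct (Rle_dec (P i) (P n)).
    + exists n. split; [lia|]. intros j Hj.
      destruct (Nat.eq_dec j n) as [-> | Hjn]; [lra|].
      assert (P j <= P i) by (apply Hmax; lia). lra.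
    + exists i. split; [lia|]. intros j Hj.
      destruct (Nat.eq_dec j n) as [-> | Hjn]; [lra|]. apply Hmax; lia.
Qed.

Lemma full_power_dominates (n : nat) (Pmax : R) (g : nat -> nat -> R)
  (hn : (1 <= n)%nat) (hP : 0 < Pmax)
  (hg : forall i j, (i < n)%nat -> (j < n)%nat -> 0 <= g i j)
  (P : nat -> R) : power_ok n Pmax P ->
  exists i Q, (i < n)%nat /\ power_ok n Pmax Q /\ Q i = Pmax /\
              vle n (rate n g P) (rate n g Q).
Proof.
  intros HP.
  assert (HP0 : forall j, (j < n)%nat -> 0 <= P j) by (intros j Hj; apply HP; auto).
  destruct (exists_argmax n P hn) as [i [Hi Hmax]].
  exists i.
  destruct (Req_dec (P i) 0) as [Hzero | Hnz].
  - (* all users are silent: every rate is 0, and full power everywhere dominates *)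
    exists (fun _ => Pmax). split; [exact Hi|]. split; [intros j _; lra|].
    split; [reflexivity|]. intros k Hk.
    assert (Pk : P k = 0) by (pose proof (Hmax k Hk); pose proof (HP0 k Hk); lra).
    rewrite (rate_silent n g P k Pk).
    apply rate_nonneg; auto. intros; lra.
  - (* rescale so that the strongest user reaches Pmax *)
    assert (Hpos : 0 < P i) by (pose proof (HP0 i Hi); lra).
    set (c := Pmax / P i).
    assert (Hc : 1 <= c).
    { unfold c. destruct (HP i Hi). apply Rmult_le_reg_r with (P i); auto.
      unfold Rdiv. rewrite Rmult_assoc, Rinv_l; lra. }
    assert (Hci : c * P i = Pmax) by (unfold c; field; lra).
    exists (fun j => c * P j). split; [exact Hi|]. split; [|split; [exact Hci|]].
    + intros j Hj. split.
      * apply Rmult_le_pos; [lra | auto].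
      * rewrite <- Hci. apply Rmult_le_compat_l; [lra | auto].
    + intros k Hk. apply rate_scale; auto.
Qed.

Lemma regionA_sub_unionRi (n : nat) (Pmax : R) (g : nat -> nat -> R)
  (hn : (1 <= n)%nat) (hP : 0 < Pmax)
  (hg : forall i j, (i < n)%nat -> (j < n)%nat -> 0 <= g i j) (r : nat -> R) :
  regionA n Pmax g r -> unionRi n Pmax g r.
Proof.
  intros [Hr [P [HP Hle]]].
  destruct (full_power_dominates n Pmax g hn hP hg P HP)
    as [i [Q [Hi [HQ [HQi Hdom]]]]].
  exists i. split; [exact Hi|]. split; [exact Hr|].
  exists (rate n g Q). split.
  - exists Q. auto.
  - intros k Hk. apply Rle_trans with (rate n g P k); auto.
Qed.

Lemma unionRi_sub_regionA (n : nat) (Pmax : R) (g : nat -> nat -> R) (r : nat -> R) :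
  unionRi n Pmax g r -> regionA n Pmax g r.
Proof.
  intros [i [_ [Hr [x [[P [HP [_ Hx]]] Hle]]]]].
  split; [exact Hr|]. exists P. split; [exact HP|].
  intros k Hk. rewrite <- Hx; auto.
Qed.

Lemma conv_ext (S T : (nat -> R) -> Prop) :
  (forall x, S x <-> T x) -> forall r, conv S r <-> conv T r.
Proof.
  intros HST r.
  split; intros [m [lam [pts [Hpts Hrest]]]]; exists m, lam, pts;
    (split; [|exact Hrest]); intros k Hk;
    destruct (Hpts k Hk) as [Hlam Hin]; split; auto; apply HST; exact Hin.
Qed.

Theorem theorem1 (n : nat) (Pmax : R) (g : nat -> nat -> R)
  (hn : (2 <= n)%nat) (hP : 0 < Pmax)
  (hgii : forall i, (i < n)%nat -> 0 < g i i)
  (hgij : forall i j, (i < n)%nat -> (j < n)%nat -> 0 <= g i j) :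
  (forall r, regionA n Pmax g r <-> unionRi n Pmax g r) /\
  (forall r, conv (regionA n Pmax g) r <-> conv (unionRi n Pmax g) r).
Proof.
  assert (Hn1 : (1 <= n)%nat) by lia.
  assert (HA : forall r, regionA n Pmax g r <-> unionRi n Pmax g r).
  { intros r. split.
    - apply regionA_sub_unionRi; assumption.
    - apply unionRi_sub_regionA. }
  split; [exact HA | exact (conv_ext _ _ HA)].
Qed.
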